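(* Let $G$ be a torsion-free hyperbolic group and $\mathcal{H}$ a peripheral structure of $G$. Let $T_1$ and $T_2$ be two metric $G$-trees such that, in each of them, the elliptic subgroups are exactly the subgroups of $G$ contained in conjugates of groups of $\mathcal{H}$. Then for any automorphism $\alpha$ of $G$ preserving $\mathcal{H}$ (sending each group in $\mathcal{H}$ to a conjugate of a group of the same conjugacy class), an element $g\in G$ has polynomial $\|\cdot\|_{T_1}$-growth under $\alpha$ if and only if it has polynomial $\|\cdot\|_{T_2}$-growth under $\alpha$.
   Context: A peripheral structure is a finite tuple of conjugacy classes of subgroups of $G$. A metric $G$-tree is a metric simplicial tree with an isometric $G$-action. For such a tree $T$ and $g\in G$, $\|g\|_T=\min_v d_T(v,gv)$, the minimum over vertices $v$ of $T$. An element $g$ has polynomial $\|\cdot\|_T$-growth under $\alpha$ if there is a polynomial $P\in\mathbb{Z}[X]$ with $\|\alpha^n(g)\|_T\le P(n)$ for all $n$. *)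

From Stdlib Require Import Reals List ZArith Arith Lia.
Open Scope R_scope.

Record group := Group {
  gcar :> Type;
  gmul : gcar -> gcar -> gcar;
  gone : gcar;
  ginv : gcar -> gcar;
  gmulA : forall x y z, gmul x (gmul y z) = gmul (gmul x y) z;
  gmul1l : forall x, gmul gone x = x;
  gmulVl : forall x, gmul (ginv x) x = gone
}.

Arguments gmul {g} _ _.
Arguments gone {g}.
Arguments ginv {g} _.

Fixpoint gpow {G : group} (x : G) (n : nat) : G :=
  match n with O => gone | S m => gmul x (gpow x m) end.

Definition torsion_free (G : group) : Prop :=
  forall (x : G) (n : nat), (1 <= n)%nat -> gpow x n = gone -> x = gone.

Definition is_subgroup (G : group) (H : G -> Prop) : Prop :=
  H gone /\ (forall x y, H x -> H y -> H (gmul x y)) /\ (forall x, H x -> H (ginv x)).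

Definition in_conj {G : group} (g : G) (H : G -> Prop) (x : G) : Prop :=
  H (gmul (ginv g) (gmul x g)).

Definition is_automorphism (G : group) (a : G -> G) : Prop :=
  (forall x y, a (gmul x y) = gmul (a x) (a y)) /\
  (forall x y, a x = a y -> x = y) /\
  (forall y, exists x, a x = y).

Definition gen_word {G : group} (S : list G) (w : list G) : Prop :=
  Forall (fun s => In s S \/ In (ginv s) S) w.

Definition wprod {G : group} (w : list G) : G := fold_right gmul gone w.

Definition generates {G : group} (S : list G) : Prop :=
  forall x : G, exists w, gen_word S w /\ wprod w = x.

Definition wlen_is {G : group} (S : list G) (x : G) (n : nat) : Prop :=
  (exists w, gen_word S w /\ wprod w = x /\ length w = n) /\
  (forall w, gen_word S w -> wprod w = x -> (n <= length w)%nat).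

(* Gromov's four-point condition for the word metric d(x,y) = |x^-1 y|_S *)
Definition hyperbolic (G : group) : Prop :=
  exists S : list G, generates S /\
  exists delta : nat,
    forall (x y z t : G) (dxy dzt dxz dyt dxt dyz : nat),
      wlen_is S (gmul (ginv x) y) dxy ->
      wlen_is S (gmul (ginv z) t) dzt ->
      wlen_is S (gmul (ginv x) z) dxz ->
      wlen_is S (gmul (ginv y) t) dyt ->
      wlen_is S (gmul (ginv x) t) dxt ->
      wlen_is S (gmul (ginv y) z) dyz ->
      (dxy + dzt <= Nat.max (dxz + dyt) (dxt + dyz) + 2 * delta)%nat.

Section Walks.
Variables (V : Type) (E : V -> V -> Prop) (len : V -> V -> R).

Inductive walk : V -> list V -> V -> Prop :=
| walk_nil v : walk v nil v
| walk_cons u w l v : E u w -> walk w l v -> walk u (w :: l) v.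

Fixpoint wlength (u : V) (l : list V) : R :=
  match l with nil => 0 | w :: l' => len u w + wlength w l' end.

(* no backtracking: x_i <> x_{i+2} *)
Fixpoint reduced (u : V) (l : list V) : Prop :=
  match l with
  | w :: ((x :: _) as l') => u <> x /\ reduced w l'
  | _ => True
  end.
End Walks.

Record gtree (G : group) := GTree {
  tV : Type;
  tE : tV -> tV -> Prop;
  tlen : tV -> tV -> R;
  tE_sym : forall u v, tE u v -> tE v u;
  tE_irrefl : forall v, ~ tE v v;
  tlen_sym : forall u v, tlen u v = tlen v u;
  tlen_pos : forall u v, tE u v -> 0 < tlen u v;
  (* tree: connected, and reduced walks between two vertices are unique *)
  t_conn : forall u v, exists l, walk tV tE u l v;
  t_uniq : forall u v l1 l2, walk tV tE u l1 v -> reduced tV u l1 ->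
             walk tV tE u l2 v -> reduced tV u l2 -> l1 = l2;
  tact : G -> tV -> tV;
  tact1 : forall v, tact gone v = v;
  tactM : forall g h v, tact (gmul g h) v = tact g (tact h v);
  tact_E : forall g u v, tE u v <-> tE (tact g u) (tact g v);
  tact_len : forall g u v, tE u v -> tlen (tact g u) (tact g v) = tlen u v
}.

Arguments tV {G} _.
Arguments tE {G} _ _ _.
Arguments tlen {G} _ _ _.
Arguments tact {G} _ _ _.

(* K is elliptic: it fixes a point of the (geometric) tree, i.e. it fixes a
   vertex or leaves an edge invariant (fixing its midpoint). *)
Definition elliptic {G : group} (T : gtree G) (K : G -> Prop) : Prop :=
  (exists v, forall k, K k -> tact T k v = v) \/
  (exists u w, tE T u w /\ forall k, K k ->
     (tact T k u = u /\ tact T k w = w) \/ (tact T k u = w /\ tact T k w = u)).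

Definition elliptic_iff_peripheral {G : group} (T : gtree G) (Hs : list (G -> Prop)) : Prop :=
  forall K : G -> Prop, is_subgroup G K ->
    (elliptic T K <-> exists H g, In H Hs /\ forall x, K x -> in_conj g H x).

Definition preserves_periph {G : group} (a : G -> G) (Hs : list (G -> Prop)) : Prop :=
  forall H, In H Hs -> exists g : G,
    forall x, (exists h, H h /\ a h = x) <-> in_conj g H x.

(* ||g||_T <= r  iff  d_T(v, g v) <= r for some vertex v, where d_T(u,w) is
   the length of a (shortest) walk from u to w. *)
Definition tl_le {G : group} (T : gtree G) (g : G) (r : R) : Prop :=
  exists v l, walk (tV T) (tE T) v l (tact T g v) /\ wlength (tV T) (tlen T) v l <= r.

Fixpoint peval (p : list Z) (x : R) : R :=
  match p with nil => 0 | a :: p' => IZR a + x * peval p' x end.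

Fixpoint iter_fun {A : Type} (f : A -> A) (n : nat) (x : A) : A :=
  match n with O => x | S m => f (iter_fun f m x) end.

Definition poly_growth {G : group} (T : gtree G) (a : G -> G) (g : G) : Prop :=
  exists P : list Z, forall n : nat, tl_le T (iter_fun a n g) (peval P (INR n)).

(* If every subgroup elliptic in T1 is elliptic in T2, then
   ||h||_T2 <= A ||h||_T1 + A for all h, so polynomial growth passes from T1
   to T2 under any map alpha.

   For A: fix a vertex b of T1 and a finite set Z of vertices containing
   geodesics from b to s b for each generator s. The G-translates of edges
   between points of Z span a connected G-invariant subgraph Y. If h moves v
   by r, projecting v to Y gives p with d(p, h p) <= r inside Y, i.e. along at
   most r / e translated edges, e being the least length of such an edge.
   Stabilisers of points of Z are elliptic in T2, so for a fixed vertex c of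
   T2, whenever t z = t' z' with z, z' in Z the points t c and t' c lie within
   a uniform distance K; hence ||h||_T2 <= d(t c, h t c) <= K (r/e + 1). *)

From Stdlib Require Import Reals List ZArith Lra Classical.
Import ListNotations.
Open Scope R_scope.

Section Walks.
Variable V : Type.

Fixpoint penult (u : V) (l : list V) : V :=
  match l with
  | [] | [_] => u
  | w :: l' => penult w l'
  end.

Lemma walk_app E u l1 m l2 v :
  walk V E u l1 m -> walk V E m l2 v -> walk V E u (l1 ++ l2) v.
Proof. induction 1; simpl; auto using walk_cons. Qed.

Lemma walk_impl (E E' : V -> V -> Prop) u l v :
  (forall x y, E x y -> E' x y) -> walk V E u l v -> walk V E' u l v.
Proof. intros HE; induction 1; constructor; auto. Qed.

Lemma walk_map {W : Type} E (E' : W -> W -> Prop) (f : V -> W) u l v :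
  (forall x y, E x y -> E' (f x) (f y)) ->
  walk V E u l v -> walk W E' (f u) (map f l) (f v).
Proof. intros Hf; induction 1; simpl; constructor; auto. Qed.

Lemma walk_rev_exists E u l v :
  (forall x y, E x y -> E y x) -> walk V E u l v -> exists l', walk V E v l' u.
Proof.
  intros Esym; induction 1 as [u | u w l v Euw _ [l' IH]].
  - exists []; constructor.
  - exists (l' ++ [u]). apply walk_app with w; auto. repeat constructor; auto.
Qed.

Lemma walk_penult E u l v : walk V E u l v -> l <> [] -> E (penult u l) v.
Proof.
  induction 1 as [| u w l v Euw Hw IH]; intros Hne; [congruence |].
  destruct l as [| x l].
  - inversion Hw; subst; exact Euw.
  - apply IH; discriminate.
Qed.

Lemma walk_first_hit E (Y : V -> Prop) u l v :
  Y v -> walk V E u l v ->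
  exists p l', Y p /\ walk V (fun x y => E x y /\ ~ Y x) u l' p.
Proof.
  intros Yv; induction 1 as [u | u w l v Euw _ IH].
  - exists u, []; split; [exact Yv | constructor].
  - destruct (classic (Y u)) as [Yu | nYu].
    + exists u, []; split; [exact Yu | constructor].
    + destruct (IH Yv) as [p [l' [Yp Hl']]].
      exists p, (w :: l'); split; [exact Yp | constructor; auto].
Qed.

Lemma reduced_app E u l1 m l2 :
  walk V E u l1 m -> reduced V u l1 -> reduced V m l2 ->
  (forall x l2', l2 = x :: l2' -> l1 <> [] -> penult u l1 <> x) ->
  reduced V u (l1 ++ l2).
Proof.
  induction 1 as [u | u w l1 m Euw Hw IH]; intros R1 R2 J; [exact R2 |].
  destruct l1 as [| x l1].
  - inversion Hw; subst. destruct l2 as [| x l2]; [exact I |].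
    split; [apply (J x l2); [reflexivity | discriminate] | exact R2].
  - destruct R1 as [Hux R1]. split; [exact Hux |].
    apply IH; auto. intros y l2' Hl2 _. apply (J y l2' Hl2). discriminate.
Qed.

Variable len : V -> V -> R.

Lemma wlength_app E u l1 m l2 :
  walk V E u l1 m ->
  wlength V len u (l1 ++ l2) = wlength V len u l1 + wlength V len m l2.
Proof. induction 1; simpl; [ring | rewrite IHwalk; ring]. Qed.

Lemma wlength_map {W : Type} E (len' : W -> W -> R) (f : V -> W) u l v :
  (forall x y, E x y -> len' (f x) (f y) = len x y) ->
  walk V E u l v -> wlength W len' (f u) (map f l) = wlength V len u l.
Proof. intros Hf; induction 1; simpl; [reflexivity | rewrite Hf, IHwalk; auto]. Qed.

Lemma wlength_nonneg E u l v :
  (forall x y, E x y -> 0 <= len x y) -> walk V E u l v -> 0 <= wlength V len u l.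
Proof. intros Hlen; induction 1 as [| u w l v Euw _ IH]; simpl; [lra |].
  specialize (Hlen _ _ Euw); lra. Qed.

Lemma wlength_ge_length E e u l v :
  (forall x y, E x y -> e <= len x y) ->
  walk V E u l v -> INR (length l) * e <= wlength V len u l.
Proof.
  intros He; induction 1 as [| u w l v Euw _ IH]; simpl length; [simpl; lra |].
  rewrite S_INR; simpl. specialize (He _ _ Euw); lra.
Qed.

Lemma walk_reduce E u l v :
  (forall x y, E x y -> 0 <= len x y) -> walk V E u l v ->
  exists l', walk V E u l' v /\ reduced V u l' /\
             wlength V len u l' <= wlength V len u l.
Proof.
  intros Hlen; induction 1 as [u | u w l v Euw Hw [l0 [Hl0 [R0 W0]]]].
  - exists []; repeat split; [constructor | simpl; lra].
  - pose proof (Hlen _ _ Euw).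
    destruct l0 as [| c rest].
    + inversion Hl0; subst. exists [v]; repeat split.
      * repeat constructor; exact Euw.
      * simpl in *; lra.
    + inversion Hl0 as [| ? ? ? ? Ewc Hrest]; subst.
      pose proof (Hlen _ _ Ewc).
      destruct (classic (u = c)) as [<- | Huc].
      * exists rest; split; [exact Hrest | split].
        -- destruct rest; simpl in *; tauto.
        -- simpl in *; lra.
      * exists (w :: c :: rest); split; [repeat constructor; auto | split].
        -- split; [exact Huc | exact R0].
        -- simpl in *; lra.
Qed.

End Walks.

Arguments penult {V} u l.

Section Groups.
Context {G : group}.

Lemma gmulV (x : G) : gmul x (ginv x) = gone.
Proof.
  rewrite <- (gmul1l G (gmul x (ginv x))), <- (gmulVl G (ginv x)) at 1.
  rewrite <- gmulA, (gmulA G (ginv x) x), gmulVl, gmul1l. apply gmulVl.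
Qed.

Lemma gmul1r (x : G) : gmul x gone = x.
Proof. rewrite <- (gmulVl G x), gmulA, gmulV, gmul1l; reflexivity. Qed.

Lemma ginv1 : ginv (gone : G) = gone.
Proof. rewrite <- (gmul1r (ginv gone)). apply gmulVl. Qed.

Lemma trivial_subgroup : is_subgroup G (fun x => x = gone).
Proof.
  split; [reflexivity | split].
  - intros x y -> ->. apply gmul1l.
  - intros x ->. apply ginv1.
Qed.

End Groups.

Section Trees.
Context {G : group}.
Variable T : gtree G.

Lemma tact_ginv_l g v : tact T (ginv g) (tact T g v) = v.
Proof. rewrite <- tactM, gmulVl, tact1; reflexivity. Qed.

Lemma tact_ginv_r g v : tact T g (tact T (ginv g) v) = v.
Proof. rewrite <- tactM, gmulV, tact1; reflexivity. Qed.

Lemma stabilizer_subgroup v : is_subgroup G (fun k => tact T k v = v).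
Proof.
  split; [apply tact1 | split].
  - intros x y Hx Hy. rewrite tactM, Hy, Hx; reflexivity.
  - intros x Hx. rewrite <- Hx at 1. apply tact_ginv_l.
Qed.

Lemma tlen_nonneg u v : tE T u v -> 0 <= tlen T u v.
Proof. intros H; apply Rlt_le, tlen_pos, H. Qed.

Definition dist_le (x y : tV T) (r : R) : Prop :=
  exists l, walk (tV T) (tE T) x l y /\ wlength (tV T) (tlen T) x l <= r.

Lemma dist_le_refl x : dist_le x x 0.
Proof. exists []; split; [constructor | simpl; lra]. Qed.

Lemma dist_le_weaken x y r r' : dist_le x y r -> r <= r' -> dist_le x y r'.
Proof. intros [l [Hl Hr]] Hrr'; exists l; split; [exact Hl | lra]. Qed.

Lemma dist_le_trans x y z r r' : dist_le x y r -> dist_le y z r' -> dist_le x z (r + r').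
Proof.
  intros [l [Hl Hr]] [l' [Hl' Hr']]. exists (l ++ l'); split.
  - apply walk_app with y; assumption.
  - rewrite (wlength_app _ _ _ _ _ _ _ Hl); lra.
Qed.

Lemma dist_le_act g x y r : dist_le x y r -> dist_le (tact T g x) (tact T g y) r.
Proof.
  intros [l [Hl Hr]]. exists (map (tact T g) l); split.
  - apply walk_map with (tE T); [intros u v; apply tact_E | exact Hl].
  - rewrite (wlength_map _ _ _ _ _ _ _ _ (tact_len G T g) Hl); exact Hr.
Qed.

Lemma dist_le_edge x y : tE T x y -> dist_le x y (tlen T x y).
Proof. intros Hxy; exists [y]; split; [repeat constructor; exact Hxy | simpl; lra]. Qed.

Lemma dist_le_exists x y : exists r, dist_le x y r.
Proof.
  destruct (t_conn G T x y) as [l Hl].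
  exists (wlength (tV T) (tlen T) x l), l; split; [exact Hl | lra].
Qed.

Lemma dist_le_nonneg x y r : dist_le x y r -> 0 <= r.
Proof.
  intros [l [Hl Hr]]. pose proof (wlength_nonneg _ _ _ _ _ _ tlen_nonneg Hl); lra.
Qed.

Lemma reduced_walk_shortest u L l q :
  walk (tV T) (tE T) u L q -> reduced (tV T) u L -> walk (tV T) (tE T) u l q ->
  wlength (tV T) (tlen T) u L <= wlength (tV T) (tlen T) u l.
Proof.
  intros HL RL Hl.
  destruct (walk_reduce _ _ _ _ _ _ tlen_nonneg Hl) as [l' [Hl' [Rl' Hle]]].
  rewrite (t_uniq G T _ _ _ _ HL RL Hl' Rl'); exact Hle.
Qed.

Lemma elliptic_orbit_bounded (K : G -> Prop) c :
  elliptic T K -> exists r, forall k, K k -> dist_le c (tact T k c) r.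
Proof.
  intros HK.
  assert (Hw : exists w r0, forall k, K k -> dist_le w (tact T k w) r0).
  { destruct HK as [[w Hw] | [u [w [Huw Hk]]]].
    - exists w, 0. intros k Hkk. rewrite (Hw k Hkk). apply dist_le_refl.
    - exists u, (tlen T u w). intros k Hkk.
      destruct (Hk k Hkk) as [[-> _] | [-> _]].
      + apply dist_le_weaken with 0; [apply dist_le_refl | apply tlen_nonneg, Huw].
      + apply dist_le_edge, Huw. }
  destruct Hw as [w [r0 Hw]].
  destruct (dist_le_exists c w) as [a Ha], (dist_le_exists w c) as [a' Ha'].
  exists (a + r0 + a'). intros k Hk.
  apply dist_le_trans with (tact T k w).
  - apply dist_le_trans with w; auto.
  - apply dist_le_act, Ha'.
Qed.

(* The walk [v ~> p] meets [Y] only at [p], so followed by [M] it is the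
   reduced walk [v ~> h p]; comparing it with [v ~> h v ~> h p] gives
   [|M| + d(v, p) <= d(v, h v) + d(h v, h p)]. *)
Lemma tl_le_within (Y : tV T -> Prop) (E : tV T -> tV T -> Prop) h y0 r :
  (forall x y, E x y -> tE T x y) ->
  (forall x y, Y x -> E x y -> Y y) ->
  Y y0 ->
  (forall p, Y p -> exists M, walk (tV T) E p M (tact T h p)) ->
  tl_le T h r ->
  exists p M, Y p /\ walk (tV T) E p M (tact T h p) /\
              wlength (tV T) (tlen T) p M <= r.
Proof.
  intros hE hY Hy0 hM [v [l [Hl Hlr]]].
  destruct (t_conn G T v y0) as [l0 Hl0].
  destruct (walk_first_hit _ _ Y _ _ _ Hy0 Hl0) as [p [L0 [Hp HL0]]].
  destruct (walk_reduce _ (tlen T) _ _ _ _ (fun x y H => tlen_nonneg x y (proj1 H)) HL0)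
    as [L1 [HL1 [RL1 _]]].
  destruct (hM p Hp) as [M0 HM0].
  destruct (walk_reduce _ (tlen T) _ _ _ _ (fun x y H => tlen_nonneg x y (hE x y H)) HM0)
    as [M [HM [RM _]]].
  exists p, M; split; [exact Hp | split; [exact HM |]].
  assert (Hred : reduced (tV T) v (L1 ++ M)).
  { apply (reduced_app _ _ _ _ _ _ HL1 RL1 RM).
    intros x M' -> HL1ne Hx.
    destruct (walk_penult _ _ _ _ _ HL1 HL1ne) as [_ HnY]. apply HnY. rewrite Hx.
    inversion HM; subst. eapply hY; eauto. }
  assert (Hgeo : walk (tV T) (tE T) v (L1 ++ M) (tact T h p)).
  { apply walk_app with p.
    - apply walk_impl with (fun x y => tE T x y /\ ~ Y x); [tauto | exact HL1].
    - apply walk_impl with E; [exact hE | exact HM]. }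
  assert (Hdetour : walk (tV T) (tE T) v (l ++ map (tact T h) L1) (tact T h p)).
  { apply walk_app with (tact T h v); [exact Hl |].
    apply walk_map with (fun x y => tE T x y /\ ~ Y x); [| exact HL1].
    intros x y [Hxy _]; apply tact_E, Hxy. }
  pose proof (reduced_walk_shortest _ _ _ _ Hgeo Hred Hdetour) as Hle.
  rewrite (wlength_app _ _ _ _ _ _ _ HL1), (wlength_app _ _ _ _ _ _ _ Hl),
    (wlength_map _ _ _ _ _ _ _ _ (fun x y H => tact_len G T h x y (proj1 H)) HL1) in Hle.
  lra.
Qed.

End Trees.

Lemma finite_upper_bound {A : Type} (P : A -> R -> Prop) (L : list A) :
  (forall x a a', P x a -> a <= a' -> P x a') ->
  (forall x, In x L -> exists a, P x a) ->
  exists a, 0 <= a /\ forall x, In x L -> P x a.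
Proof.
  intros Hmono; induction L as [| x L IH]; intros HL.
  - exists 0; split; [lra | intros _ []].
  - destruct (HL x (or_introl eq_refl)) as [a Ha].
    destruct IH as [b [Hb0 Hb]]; [intros y Hy; apply HL; right; exact Hy |].
    exists (Rmax a b); split; [apply Rle_trans with b; [exact Hb0 | apply Rmax_r] |].
    intros y [<- | Hy]; [apply Hmono with a; [exact Ha | apply Rmax_l] |].
    apply Hmono with b; [apply Hb, Hy | apply Rmax_r].
Qed.

Lemma finite_lower_bound {A : Type} (P : A -> R -> Prop) (L : list A) :
  (forall x a a', P x a' -> a <= a' -> P x a) ->
  (forall x, In x L -> exists a, 0 < a /\ P x a) ->
  exists a, 0 < a /\ forall x, In x L -> P x a.
Proof.
  intros Hmono; induction L as [| x L IH]; intros HL.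
  - exists 1; split; [lra | intros _ []].
  - destruct (HL x (or_introl eq_refl)) as [a [Ha0 Ha]].
    destruct IH as [b [Hb0 Hb]]; [intros y Hy; apply HL; right; exact Hy |].
    exists (Rmin a b); split; [apply Rmin_glb_lt; assumption |].
    intros y [<- | Hy]; [apply Hmono with a; [exact Ha | apply Rmin_l] |].
    apply Hmono with b; [apply Hb, Hy | apply Rmin_r].
Qed.

Section Span.
Context {G : group}.
Variable T : gtree G.

Definition span_edge (Z : list (tV T)) (x y : tV T) : Prop :=
  tE T x y /\
  exists t z z', In z Z /\ In z' Z /\ x = tact T t z /\ y = tact T t z'.

Definition span_reach (Z : list (tV T)) (b y : tV T) : Prop :=
  exists t l, walk (tV T) (span_edge Z) y l (tact T t b).

Lemma span_edge_sym Z x y : span_edge Z x y -> span_edge Z y x.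
Proof.
  intros [Hxy [t [z [z' [Hz [Hz' [Hx Hy]]]]]]].
  split; [apply tE_sym, Hxy | exists t, z', z; auto].
Qed.

Lemma span_edge_act Z g x y :
  span_edge Z x y -> span_edge Z (tact T g x) (tact T g y).
Proof.
  intros [Hxy [t [z [z' [Hz [Hz' [-> ->]]]]]]].
  split; [apply tact_E, Hxy |].
  exists (gmul g t), z, z'. rewrite !tactM; auto.
Qed.

Lemma span_edge_incl Z Z' x y : incl Z Z' -> span_edge Z x y -> span_edge Z' x y.
Proof.
  intros HZ [Hxy [t [z [z' [Hz [Hz' Hxy']]]]]].
  split; [exact Hxy | exists t, z, z'; auto].
Qed.

Lemma span_edge_tlen_lower_bound Z :
  exists e, 0 < e /\ forall x y, span_edge Z x y -> e <= tlen T x y.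
Proof.
  destruct (finite_lower_bound
              (fun zz e => tE T (fst zz) (snd zz) -> e <= tlen T (fst zz) (snd zz))
              (list_prod Z Z)) as [e [He0 He]].
  - intros zz a a' H Ha Hzz. specialize (H Hzz); lra.
  - intros [z z'] _. destruct (classic (tE T z z')) as [Hzz | Hzz].
    + exists (tlen T z z'); split; [apply tlen_pos, Hzz | simpl; lra].
    + exists 1; split; [lra | simpl; tauto].
  - exists e; split; [exact He0 |].
    intros x y [Hxy [t [z [z' [Hz [Hz' [-> ->]]]]]]].
    apply tact_E in Hxy. rewrite tact_len by exact Hxy.
    apply (He (z, z')); [apply in_prod |]; assumption.
Qed.

Lemma walk_span_edge Z u l v :
  walk (tV T) (tE T) u l v -> incl (u :: l) Z -> walk (tV T) (span_edge Z) u l v.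
Proof.
  induction 1 as [u | u w l v Euw _ IH]; intros HZ; constructor.
  - split; [exact Euw |]. exists gone, u, w. rewrite !tact1.
    repeat split; apply HZ; simpl; auto.
  - apply IH. intros x Hx; apply HZ; right; exact Hx.
Qed.

Lemma span_generators (S : list G) (b : tV T) :
  exists Z, In b Z /\
    forall s, In s S -> exists l, walk (tV T) (span_edge Z) b l (tact T s b).
Proof.
  induction S as [| s S [Z [HbZ HS]]].
  - exists [b]; split; [left; reflexivity | intros _ []].
  - destruct (t_conn G T b (tact T s b)) as [l Hl].
    exists ((b :: l) ++ Z); split; [left; reflexivity |].
    intros s' [<- | Hs'].
    + exists l. apply walk_span_edge; [exact Hl | apply incl_appl, incl_refl].
    + destruct (HS s' Hs') as [l' Hl']. exists l'.
      apply walk_impl with (span_edge Z); [| exact Hl'].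
      intros x y; apply span_edge_incl, incl_appr, incl_refl.
Qed.

Lemma span_reach_edge Z b y w :
  span_reach Z b y -> span_edge Z y w -> span_reach Z b w.
Proof.
  intros [t [l Hl]] Hyw. exists t, (y :: l). constructor; [apply span_edge_sym |]; assumption.
Qed.

Lemma span_reach_in_orbit Z b y :
  In b Z -> span_reach Z b y -> exists t a, In a Z /\ y = tact T t a.
Proof.
  intros HbZ [t [l Hl]]. inversion Hl as [| ? w ? ? [_ [t' [z [_ [Hz [_ [Hy _]]]]]]] _]; subst.
  - exists t, b; auto.
  - exists t', z; auto.
Qed.

Section Generators.
Variables (S : list G) (Z : list (tV T)) (b : tV T).
Hypothesis HS : forall s, In s S -> exists l, walk (tV T) (span_edge Z) b l (tact T s b).

Lemma span_walk_word w :
  gen_word S w -> forall t,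
  exists l, walk (tV T) (span_edge Z) (tact T t b) l (tact T t (tact T (wprod w) b)).
Proof.
  induction w as [| s w IH]; intros Hw t; simpl.
  - exists []. rewrite tact1. constructor.
  - inversion Hw as [| ? ? Hs Hw']; subst.
    assert (Hstep : exists l, walk (tV T) (span_edge Z) (tact T t b) l (tact T (gmul t s) b)).
    { destruct Hs as [Hs | Hs].
      - destruct (HS s Hs) as [l Hl]. exists (map (tact T t) l). rewrite tactM.
        apply walk_map with (span_edge Z); [apply span_edge_act | exact Hl].
      - destruct (HS (ginv s) Hs) as [l Hl].
        eapply walk_rev_exists; [apply span_edge_sym |].
        rewrite <- (tact_ginv_r T s b) at 2. rewrite <- tactM.
        apply walk_map with (span_edge Z); [apply span_edge_act | exact Hl]. }
    destruct Hstep as [l1 Hl1], (IH Hw' (gmul t s)) as [l2 Hl2].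
    exists (l1 ++ l2). apply walk_app with (tact T (gmul t s) b); [exact Hl1 |].
    rewrite <- !tactM, <- gmulA in Hl2. rewrite <- !tactM. exact Hl2.
Qed.

Lemma span_walk_translate (gen : generates S) h y :
  span_reach Z b y -> exists M, walk (tV T) (span_edge Z) y M (tact T h y).
Proof.
  intros [t [l Hl]].
  destruct (gen (gmul (ginv t) (gmul h t))) as [w [Hw Hwt]].
  destruct (span_walk_word w Hw t) as [l1 Hl1].
  rewrite Hwt, !tactM, tact_ginv_r in Hl1.
  destruct (walk_rev_exists _ _ _ _ _ (span_edge_sym Z)
              (walk_map _ _ _ _ _ _ _ (span_edge_act Z h) Hl)) as [l2 Hl2].
  exists (l ++ l1 ++ l2).
  apply walk_app with (tact T t b); [exact Hl |].
  apply walk_app with (tact T h (tact T t b)); assumption.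
Qed.

End Generators.
End Span.

Section Comparison.
Context {G : group}.
Variables T1 T2 : gtree G.
Hypothesis ell : forall K, is_subgroup G K -> elliptic T1 K -> elliptic T2 K.

Lemma translator_bound c z1 z2 :
  exists r, forall u, tact T1 u z1 = z2 -> dist_le T2 c (tact T2 u c) r.
Proof.
  destruct (classic (exists u0, tact T1 u0 z1 = z2)) as [[u0 Hu0] | Hnone].
  2: { exists 0. intros u Hu. exfalso; eauto. }
  assert (Hstab : elliptic T2 (fun k => tact T1 k z1 = z1)).
  { apply ell; [apply stabilizer_subgroup | left; exists z1; auto]. }
  destruct (elliptic_orbit_bounded T2 _ c Hstab) as [rs Hrs].
  destruct (dist_le_exists T2 c (tact T2 u0 c)) as [r0 Hr0].
  exists (r0 + rs). intros u Hu.
  apply dist_le_trans with (tact T2 u0 c); [exact Hr0 |].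
  replace (tact T2 u c) with (tact T2 u0 (tact T2 (gmul (ginv u0) u) c))
    by (rewrite tactM; apply tact_ginv_r).
  apply dist_le_act, Hrs. rewrite tactM, Hu, <- Hu0. apply tact_ginv_l.
Qed.

Lemma uniform_translator_bound c (Z : list (tV T1)) :
  exists K, 0 <= K /\ forall z z', In z Z -> In z' Z ->
    forall u, tact T1 u z = z' -> dist_le T2 c (tact T2 u c) K.
Proof.
  destruct (finite_upper_bound
              (fun zz K => forall u, tact T1 u (fst zz) = snd zz ->
                                     dist_le T2 c (tact T2 u c) K)
              (list_prod Z Z)) as [K [HK0 HK]].
  - intros zz a a' H Ha u Hu. apply dist_le_weaken with a; auto.
  - intros [z z'] _. apply translator_bound.
  - exists K; split; [exact HK0 |]. intros z z' Hz Hz'.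
    apply (HK (z, z')), in_prod; assumption.
Qed.

Section Transfer.
Variables (c : tV T2) (Z : list (tV T1)) (K : R).
Hypothesis HK : forall z z', In z Z -> In z' Z ->
  forall u, tact T1 u z = z' -> dist_le T2 c (tact T2 u c) K.

Lemma translate_dist t a t' a' :
  In a Z -> In a' Z -> tact T1 t a = tact T1 t' a' ->
  dist_le T2 (tact T2 t c) (tact T2 t' c) K.
Proof.
  intros Ha Ha' Heq.
  replace (tact T2 t' c) with (tact T2 t (tact T2 (gmul (ginv t) t') c))
    by (rewrite tactM; apply tact_ginv_r).
  apply dist_le_act, (HK a' a); [assumption | assumption |].
  rewrite tactM, <- Heq. apply tact_ginv_l.
Qed.

Lemma span_walk_dist y l y' :
  walk (tV T1) (span_edge T1 Z) y l y' ->
  forall t a t' a', In a Z -> In a' Z -> y = tact T1 t a -> y' = tact T1 t' a' ->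
  dist_le T2 (tact T2 t c) (tact T2 t' c) (K * (INR (length l) + 1)).
Proof.
  induction 1 as [y | y w l y' [_ [s [z [z' [Hz [Hz' [Hy Hw]]]]]]] _ IH];
    intros t a t' a' Ha Ha' -> Hy'.
  - apply dist_le_weaken with K; [apply translate_dist with a a'; auto | simpl; lra].
  - apply dist_le_weaken with (K + K * (INR (length l) + 1)).
    + apply dist_le_trans with (tact T2 s c).
      * apply translate_dist with a z; auto.
      * apply IH with z' a'; auto.
    + simpl length. rewrite S_INR. lra.
Qed.

End Transfer.

Lemma tl_le_affine_bound (S : list G) (gen : generates S) (b : tV T1) :
  exists A, forall h r, tl_le T1 h r -> tl_le T2 h (A * r + A).
Proof.
  destruct (span_generators T1 S b) as [Z [HbZ HS]].
  destruct (span_edge_tlen_lower_bound T1 Z) as [e [He0 He]].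
  assert (Hc : exists c : tV T2, True).
  { assert (Htriv : elliptic T2 (fun x : G => x = gone)).
    { apply ell; [apply trivial_subgroup | left; exists b; intros k ->; apply tact1]. }
    destruct Htriv as [[c _] | [c [_ _]]]; exists c; trivial. }
  destruct Hc as [c _].
  destruct (uniform_translator_bound c Z) as [K [HK0 HK]].
  exists (K / e + K). intros h r Hr.
  assert (Hb : span_reach T1 Z b b) by (exists gone, []; rewrite tact1; constructor).
  destruct (tl_le_within T1 (span_reach T1 Z b) (span_edge T1 Z) h b r
              (fun x y H => proj1 H) (span_reach_edge T1 Z b) Hb
              (span_walk_translate T1 S Z b HS gen h) Hr) as [p [M [Hp [HM HMr]]]].
  destruct (span_reach_in_orbit T1 Z b p HbZ Hp) as [t [a [Ha ->]]].
  pose proof (wlength_ge_length _ _ _ _ _ _ _ He HM) as Hcount.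
  exists (tact T2 t c).
  apply dist_le_weaken with (K * (INR (length M) + 1)).
  - rewrite <- tactM. apply (span_walk_dist c Z K HK _ _ _ HM t a (gmul h t) a); auto.
    rewrite tactM; reflexivity.
  - assert (HKe : 0 <= K / e).
    { unfold Rdiv; apply Rmult_le_pos; [exact HK0 | apply Rlt_le, Rinv_0_lt_compat, He0]. }
    assert (Hr0 : 0 <= r) by (pose proof (pos_INR (length M)); nra).
    assert (Hsteps : K * INR (length M) <= K / e * r).
    { replace (K * INR (length M)) with (K / e * (INR (length M) * e)) by (field; lra).
      apply Rmult_le_compat_l; lra. }
    pose proof (Rmult_le_pos _ _ HK0 Hr0). lra.
Qed.

End Comparison.

Lemma peval_map_mul N P x : peval (map (Z.mul N) P) x = IZR N * peval P x.
Proof. induction P as [| a P IH]; simpl; [ring | rewrite IH, mult_IZR; ring]. Qed.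

Lemma peval_affine N P : exists Q, forall x, peval Q x = IZR N * peval P x + IZR N.
Proof.
  destruct P as [| a P].
  - exists [N]; intros x; simpl; ring.
  - exists ((N * a + N)%Z :: map (Z.mul N) P); intros x; simpl.
    rewrite peval_map_mul, plus_IZR, mult_IZR; ring.
Qed.

Lemma poly_growth_of_affine_bound {G : group} (T1 T2 : gtree G) alpha g A :
  (forall h r, tl_le T1 h r -> tl_le T2 h (A * r + A)) ->
  poly_growth T1 alpha g -> poly_growth T2 alpha g.
Proof.
  intros HA [P HP].
  destruct (peval_affine (up A) P) as [Q HQ].
  destruct (archimed A) as [HN _].
  exists Q; intros n. rewrite HQ.
  destruct (HA _ _ (HP n)) as [v Hv]. exists v.
  destruct (HP n) as [w Hw].
  pose proof (dist_le_nonneg T1 _ _ _ Hw).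
  apply dist_le_weaken with (1 := Hv). nra.
Qed.

Lemma poly_growth_transfer {G : group} (T1 T2 : gtree G)
  (ell : forall K, is_subgroup G K -> elliptic T1 K -> elliptic T2 K)
  (S : list G) (gen : generates S) alpha g :
  poly_growth T1 alpha g -> poly_growth T2 alpha g.
Proof.
  intros [P HP]. destruct (HP 0%nat) as [b _].
  destruct (tl_le_affine_bound T1 T2 ell S gen b) as [A HA].
  exact (poly_growth_of_affine_bound T1 T2 alpha g A HA (ex_intro _ P HP)).
Qed.

Theorem lemma3p1 (G : group) (Hs : list (G -> Prop))
  (hhyp : hyperbolic G) (htf : torsion_free G)
  (hHs : forall H, In H Hs -> is_subgroup G H)
  (T1 T2 : gtree G)
  (hT1 : elliptic_iff_peripheral T1 Hs)
  (hT2 : elliptic_iff_peripheral T2 Hs)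
  (alpha : G -> G) (halpha : is_automorphism G alpha)
  (hpres : preserves_periph alpha Hs)
  (g : G) :
  poly_growth T1 alpha g <-> poly_growth T2 alpha g.
Proof.
  destruct hhyp as [S [gen _]].
  split; apply poly_growth_transfer with S; auto; intros K HK Hell.
  - apply hT2, hT1; assumption.
  - apply hT1, hT2; assumption.
Qed.
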